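(* Let $H$ be a finite nilpotent group, with Sylow $p$-subgroups $H_p$ for $p$ in the set $\pi$ of primes dividing $|H|$, so $H=\prod_{p\in\pi}H_p$. Suppose each $H_p$ is metacyclic with a metacyclic factorization $H_p=B_pA_p$ ($A_p$, $B_p$ cyclic, $A_p\trianglelefteq H_p$) such that the family $\mathcal{F}_{H_p}$ consisting of $A_p$, $B_p$ and the conjugates of $B_p$ in $H_p$ is regular and independent in $H_p$ and $H_p$ is its active sum. Let $\mathcal{F}_H=\bigcup_{p\in\pi}\mathcal{F}_{H_p}$. Then $H$ is the active sum of $\mathcal{F}_H$.
   Context: For a group $G$ and a family $\mathcal{F}$ of distinct subgroups that generates $G$ and is closed under conjugation, the active sum $S$ of $\mathcal{F}$ is the free product of the members of $\mathcal{F}$ divided by the normal subgroup generated by all elements $h^{-1}\cdot g\cdot h\cdot (g^h)^{-1}$ with $h\in F_1$, $g\in F_2$, $F_1,F_2\in\mathcal{F}$, where $g^h=h^{-1}gh$ is regarded as an element of the factor $h^{-1}F_2h\in\mathcal{F}$; the inclusions induce a canonical surjection $\varphi:S\to G$ and ''$G$ is the active sum of $\mathcal{F}$'' means $\varphi$ is an isomorphism. A (discrete) family is regular iff $[F,N_G(F)]=F\cap G'$ for all $F\in\mathcal{F}$; it is independent iff for a set $\mathcal{T}$ of representatives of conjugacy classes of its members the canonical map $\bigoplus_{F\in\mathcal{T}}F/(F\cap G')\to G/G'$ is an isomorphism. (Such factorizations of each $H_p$ exist by the paper's result on metacyclic $p$-groups.) *)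

From HB Require Import structures.
From mathcomp Require Import all_boot all_fingroup all_solvable.
Set Implicit Arguments. Unset Strict Implicit. Unset Printing Implicit Defensive.
Import GroupScope.

(* An arbitrary (possibly infinite) group, used as target of the universal
   property defining the active sum (the active sum may a priori be infinite). *)
Record Grp := {
  gcar :> Type;
  gmul : gcar -> gcar -> gcar;
  gone : gcar;
  ginv : gcar -> gcar;
  gmulA : forall x y z, gmul x (gmul y z) = gmul (gmul x y) z;
  gmul1 : forall x, gmul gone x = x;
  gmulV : forall x, gmul (ginv x) x = gone }.

Section ActiveSum.
Variable gT : finGroupType.

Definition hom_on (K : Grp) (F : {set gT}) (f : gT -> K) : Prop :=
  {in F &, forall x y, f (x * y) = gmul (f x) (f y)}.

Definition conj_closed_gen_family (G : {group gT}) (Fam : {set {group gT}}) : Prop :=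
  [/\ forall F, F \in Fam -> F \subset G,
      forall F x, F \in Fam -> x \in G -> (F :^ x)%G \in Fam
    & <<\bigcup_(F in Fam) F>> = G].

(* Compatible families of homomorphisms out of the factors of the free product,
   i.e. those killing h^-1 g h (g^h)^-1 for h in F1, g in F2, g^h in F2^h. *)
Definition compatible_family (K : Grp) (Fam : {set {group gT}})
    (f : {group gT} -> gT -> K) : Prop :=
  (forall F, F \in Fam -> hom_on F (f F)) /\
  (forall F1 F2 h g, F1 \in Fam -> F2 \in Fam -> h \in F1 -> g \in F2 ->
     f (F2 :^ h)%G (g ^ h) = gmul (gmul (ginv (f F1 h)) (f F2 g)) (f F1 h)).

(* G is the active sum of Fam: the canonical map from the free product modulo
   the conjugation relations to G is an isomorphism, i.e. G (with the
   inclusions) satisfies the universal property of that quotient. *)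
Definition is_active_sum (G : {group gT}) (Fam : {set {group gT}}) : Prop :=
  conj_closed_gen_family G Fam /\
  forall (K : Grp) (f : {group gT} -> gT -> K),
    compatible_family Fam f ->
    exists phi : gT -> K,
      [/\ hom_on G phi,
          (forall F, F \in Fam -> {in F, forall x, phi x = f F x})
        & forall psi : gT -> K, hom_on G psi ->
            (forall F, F \in Fam -> {in F, forall x, psi x = f F x}) ->
            {in G, forall x, psi x = phi x}].

Definition regular_family (G : {group gT}) (Fam : {set {group gT}}) : Prop :=
  forall F : {group gT}, F \in Fam -> [~: F, 'N_G(F)] = F :&: G^`(1).

Definition conj_class_reps (G : {group gT}) (Fam T : {set {group gT}}) : Prop :=
  T \subset Fam /\
  forall F, F \in Fam ->
    exists! F' : {group gT}, F' \in T /\ exists2 x, x \in G & F = (F' :^ x)%G.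

(* Independent: for a set T of representatives, the canonical map
   (+)_{F in T} F/(F :&: G') -> G/G', (x_F) |-> prod_F x_F G', is an isomorphism
   (it is a homomorphism; we state surjectivity and triviality of the kernel). *)
Definition independent_family (G : {group gT}) (Fam : {set {group gT}}) : Prop :=
  exists T : {set {group gT}}, conj_class_reps G Fam T /\
  (forall y, y \in G -> exists x : {group gT} -> gT,
      (forall F, F \in T -> x F \in F) /\
      coset G^`(1) y = \prod_(F in T) coset G^`(1) (x F)) /\
  (forall x : {group gT} -> gT, (forall F, F \in T -> x F \in F) ->
      \prod_(F in T) coset G^`(1) (x F) = 1 ->
      forall F, F \in T -> x F \in F :&: G^`(1)).

End ActiveSum.

Definition metacyc_family (gT : finGroupType) (P A B : {group gT}) : {set {group gT}} :=
  A |: [set (B :^ x)%G | x in P].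

From HB Require Import structures.
From mathcomp Require Import all_boot all_fingroup all_solvable.
From Stdlib Require ClassicalEpsilon.
Set Implicit Arguments. Unset Strict Implicit. Unset Printing Implicit Defensive.
Import GroupScope.

(* A finite nilpotent group H is the direct product of its Sylow subgroups
   O_p(H); of the hypotheses on O_p(H) = P p only the fact that it is the
   active sum of its family is needed.  Given a compatible family f on the
   union of the families, the universal property of O_p(H) yields
   homomorphisms Phi_p on each O_p(H).  Their values commute for distinct
   primes: the conjugation relations between elements of commuting factors
   say exactly that the f-images commute, and this propagates to the
   subgroups they generate.  Hence x |-> prod_p Phi_p(x_p), with x_p the
   p-part of x, is a homomorphism on H extending f; it is unique because the
   union of the families generates H. *)

Section GrpTheory.

Variable K : Grp.
Local Notation "x ** y" := (gmul x y) (at level 40, left associativity).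
Local Notation "1'" := (gone K).

Lemma gmulVr (x : K) : x ** ginv x = 1'.
Proof.
set y := x ** ginv x.
have yy : y ** y = y by rewrite /y -gmulA (gmulA (ginv x)) gmulV gmul1.
by rewrite -[y]gmul1 -(gmulV y) -gmulA yy.
Qed.

Lemma gmulr1 (x : K) : x ** 1' = x.
Proof. by rewrite -(gmulV x) gmulA gmulVr gmul1. Qed.

Lemma gmulI (a : K) : injective (gmul a).
Proof. by move=> b c e; rewrite -[b]gmul1 -[c]gmul1 -(gmulV a) -!gmulA e. Qed.

HB.instance Definition _ :=
  Monoid.isLaw.Build K 1' (@gmul K) (@gmulA K) (@gmul1 K) gmulr1.

Definition gcomm (x y : K) := x ** y = y ** x.

Lemma gcommC (a b : K) : gcomm a b -> gcomm b a.
Proof. by move=> e; rewrite /gcomm e. Qed.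

Lemma gcomm1 (a : K) : gcomm 1' a.
Proof. by rewrite /gcomm gmul1 gmulr1. Qed.

Lemma gcommMl (a b c : K) : gcomm a c -> gcomm b c -> gcomm (a ** b) c.
Proof. by rewrite /gcomm => e1 e2; rewrite -gmulA e2 !gmulA e1. Qed.

Lemma gcomm_conj_fix (a c : K) : c = ginv a ** c ** a -> gcomm a c.
Proof. by move=> e; rewrite /gcomm {1}e !gmulA gmulVr gmul1. Qed.

Lemma big_gcomm (I : eqType) (s : seq I) (F : I -> K) (c : K) :
  {in s, forall i, gcomm (F i) c} -> gcomm (\big[@gmul K/1']_(i <- s) F i) c.
Proof.
elim: s => [|i s IHs] Fc; first by rewrite big_nil; apply: gcomm1.
rewrite big_cons; apply: gcommMl; first by apply: Fc; rewrite mem_head.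
by apply: IHs => j sj; apply: Fc; rewrite inE sj orbT.
Qed.

Lemma big_gmul_split (I : eqType) (s : seq I) (F G : I -> K) : uniq s ->
    {in s &, forall i j, i != j -> gcomm (G i) (F j)} ->
  \big[@gmul K/1']_(i <- s) (F i ** G i)
    = \big[@gmul K/1']_(i <- s) F i ** \big[@gmul K/1']_(i <- s) G i.
Proof.
elim: s => [|i s IHs] /=; first by rewrite !big_nil gmul1.
case/andP=> si us cGF.
have cGFs : {in s &, forall j k, j != k -> gcomm (G j) (F k)}.
  by move=> j k sj sk; apply: cGF; rewrite inE ?sj ?sk orbT.
have cGiF : gcomm (G i) (\big[@gmul K/1']_(j <- s) F j).
  apply/gcommC/big_gcomm => j sj; apply/gcommC/cGF; rewrite ?mem_head ?inE ?sj ?orbT //.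
  by apply: contraNneq si => ->.
by rewrite !big_cons IHs // -!gmulA (gmulA (G i)) cGiF !gmulA.
Qed.

Lemma big_gmul_only (I : eqType) (s : seq I) (F : I -> K) i : uniq s -> i \in s ->
  {in s, forall j, j != i -> F j = 1'} -> \big[@gmul K/1']_(j <- s) F j = F i.
Proof.
move=> us si F1.
rewrite (eq_big_seq (fun j => if j == i then F i else 1')); last first.
  by move=> j sj; case: eqP => [-> // | /eqP ji]; apply: F1.
by rewrite -big_mkcond -big_filter filter_pred1_uniq // big_seq1.
Qed.

End GrpTheory.

Lemma gen_ind (gT : finGroupType) (A : {set gT}) (P : gT -> Prop) :
    P 1 -> (forall x y, x \in <<A>> -> y \in A -> P x -> P (x * y)) ->
  {in <<A>>, forall x, P x}.
Proof.
move=> P1 PM _ /gen_prodgP[n [c Ac ->]].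
elim: n c Ac => [|n IHn] c Ac; first by rewrite big_ord0.
rewrite big_ord_recr /=; apply: PM => //; last exact: IHn.
by apply: group_prod => j _; rewrite mem_gen.
Qed.

Section HomOn.

Variables (gT : finGroupType) (K : Grp).
Implicit Types (G : {group gT}) (A : {set gT}) (phi psi : gT -> K).

Lemma hom_on1 G phi : hom_on G phi -> phi 1 = gone K.
Proof. by move=> hom; apply: (@gmulI K (phi 1)); rewrite gmulr1 -hom ?mulg1. Qed.

Lemma eq_hom_on_gen A phi psi :
    hom_on <<A>> phi -> hom_on <<A>> psi -> {in A, phi =1 psi} ->
  {in <<A>>, phi =1 psi}.
Proof.
move=> hphi hpsi eqA; apply: gen_ind => [|x y Ax Ay eqx].
  by rewrite (hom_on1 hphi) (hom_on1 hpsi).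
by rewrite hphi ?hpsi ?(mem_gen Ay) // eqx eqA.
Qed.

Lemma hom_on_gen_gcomm A phi (c : K) :
    hom_on <<A>> phi -> {in A, forall x, gcomm (phi x) c} ->
  {in <<A>>, forall x, gcomm (phi x) c}.
Proof.
move=> hphi cA; apply: gen_ind => [|x y Ax Ay cx].
  by rewrite (hom_on1 hphi); apply: gcomm1.
by rewrite hphi ?(mem_gen Ay) //; apply: gcommMl cx (cA y Ay).
Qed.

End HomOn.

Lemma mem_bigcup_seq (T : finType) (I : eqType) (s : seq I) (S : I -> {set T}) x :
  (x \in \bigcup_(i <- s) S i) = has (fun i => x \in S i) s.
Proof. by elim: s => [|i s IHs]; rewrite ?big_nil ?big_cons ?inE //= IHs. Qed.

Section Constituents.

Variable gT : finGroupType.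

Lemma prod_constt_seq (s : seq nat) (x : gT) : uniq s ->
  [pred p in s].-elt x -> \prod_(p <- s) x.`_p = x.
Proof.
elim: s x => [|p s IHs] x /=.
  move=> _ sx; rewrite big_nil -(constt_p_elt sx); apply/esym/constt1P.
  exact: sub_p_elt sx.
case/andP=> ps us sx; rewrite big_cons -[RHS](consttC p); congr (_ * _).
have sx' : [pred q in s].-elt x.`_p^'.
  apply: sub_in_pnat (mem_p_elt sx (cycle_constt _ _)) => q q_x'.
  rewrite !inE => /orP[/eqP eq_qp | //].
  by move: (pnatPpi (p_elt_constt p^' x) q_x'); rewrite !inE eq_qp eqxx.
rewrite -[RHS](IHs _ us sx') !big_seq; apply: eq_bigr => q sq.
rewrite sub_in_constt // => r _; rewrite !inE => /eqP ->.
by apply: contraNneq ps => <-.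
Qed.

Lemma prod_constt_primes (H : {group gT}) x :
  x \in H -> \prod_(p <- primes #|H|) x.`_p = x.
Proof.
move=> Hx; apply: prod_constt_seq; first exact: primes_uniq.
exact: pnat_dvd (order_dvdG Hx) (pnat_pi (cardG_gt0 H)).
Qed.

Variable H : {group gT}.
Hypothesis nilH : nilpotent H.

Lemma mem_pcore_nil rho x : x \in H -> (x \in 'O_rho(H)) = rho.-elt x.
Proof. exact: mem_normal_Hall (nilpotent_pcore_Hall _ nilH) (pcore_normal _ _). Qed.

Lemma constt_pcore_nil rho x : x \in H -> x.`_rho \in 'O_rho(H).
Proof.
move=> Hx; rewrite mem_pcore_nil ?p_elt_constt //.
by rewrite -cycle_subG in Hx; apply: (subsetP Hx); apply: cycle_constt.
Qed.

Lemma commute_pcoreC_nil rho u v :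
  u \in 'O_rho(H) -> v \in 'O_rho^'(H) -> commute u v.
Proof.
case/dprodP: (nilpotent_pcoreC rho nilH) => _ _ cOO _ Ou Ov.
exact/esym/(centP (subsetP cOO v Ov)).
Qed.

Lemma constt_divgr_nil rho x : x \in H -> x.`_rho = divgr 'O_rho(H) 'O_rho^'(H) x.
Proof.
move=> Hx; have [_ _ _ tiO] := dprodP (nilpotent_pcoreC rho nilH).
by rewrite -{2}(consttC rho x) divgrMid ?constt_pcore_nil.
Qed.

Lemma consttM_nil rho : {in H &, {morph constt^~ rho : x y / x * y}}.
Proof.
have /dprodP[_ defH cOO tiO] := nilpotent_pcoreC rho nilH.
have complO : 'O_rho^'(H)%G \in [complements to 'O_rho(H) in H] by apply/complP.
move=> x y Hx Hy; rewrite /= !constt_divgr_nil ?groupM //.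
exact: divgrM complO cOO x y Hx Hy.
Qed.

Lemma conjs_constt_nil p (A : {set gT}) x :
  A \subset 'O_p(H) -> x \in H -> A :^ x = A :^ x.`_p.
Proof.
move=> sAO Hx; rewrite -{1}(consttC p x) conjsgM.
have sAxO : A :^ x.`_p \subset 'O_p(H).
  by rewrite -(conjGid (constt_pcore_nil p Hx)) conjSg.
have [_ _ cOO _] := dprodP (nilpotent_pcoreC p nilH).
apply/normP/(subsetP (cent_sub _))/(subsetP (centS sAxO)).
exact/(subsetP cOO)/constt_pcore_nil.
Qed.

End Constituents.

Lemma commute_pcore_nil (gT : finGroupType) (H : {group gT}) (p q : nat) u v :
  nilpotent H -> p != q -> u \in 'O_p(H) -> v \in 'O_q(H) -> commute u v.
Proof.
move=> nilH pq Ou Ov; apply: commute_pcoreC_nil Ou _ => //.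
by apply: (subsetP (sub_pcore _ _) v Ov) => r; rewrite !inE => /eqP ->; rewrite eq_sym.
Qed.

Section ActiveSumNilpotent.

Variables (gT : finGroupType) (H : {group gT}) (Fam : nat -> {set {group gT}}).
Hypothesis nilH : nilpotent H.
Local Notation pi := (primes #|H|).
Hypothesis sumO : forall p, p \in pi -> is_active_sum 'O_p(H) (Fam p).
Local Notation U := (\bigcup_(p <- pi) Fam p).

Lemma mem_union_FamP F : reflect (exists2 p, p \in pi & F \in Fam p) (F \in U).
Proof. by rewrite mem_bigcup_seq; apply: hasP. Qed.

Lemma mem_union_Fam p F : p \in pi -> F \in Fam p -> F \in U.
Proof. by move=> pi_p FamF; apply/mem_union_FamP; exists p. Qed.

Lemma Fam_sub_pcore p F : p \in pi -> F \in Fam p -> F \subset 'O_p(H).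
Proof. by move=> pi_p; have [[sFO _ _] _] := sumO pi_p; apply: sFO. Qed.

Lemma union_Fam_conj_closed_gen : conj_closed_gen_family H U.
Proof.
split.
- move=> F /mem_union_FamP[p pi_p FamF].
  exact: subset_trans (Fam_sub_pcore pi_p FamF) (pcore_sub _ _).
- move=> F x /mem_union_FamP[p pi_p FamF] Hx; apply: (mem_union_Fam pi_p).
  have [[_ conjFam _] _] := sumO pi_p.
  have -> : (F :^ x)%G = (F :^ x.`_p)%G.
    by apply: group_inj; apply: conjs_constt_nil (Fam_sub_pcore pi_p FamF) Hx.
  exact/conjFam/constt_pcore_nil.
apply/eqP; rewrite eqEsubset; apply/andP; split.
  rewrite gen_subG; apply/bigcupsP => F /mem_union_FamP[p pi_p FamF].
  exact: subset_trans (Fam_sub_pcore pi_p FamF) (pcore_sub _ _).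
apply/subsetP => x Hx; rewrite -(prod_constt_primes Hx) big_seq group_prod // => p pi_p.
have [[_ _ genO] _] := sumO pi_p.
have : x.`_p \in 'O_p(H) by apply: constt_pcore_nil.
rewrite -genO; apply/subsetP/genS/bigcupsP => F FamF.
exact/bigcup_sup/(mem_union_Fam pi_p).
Qed.

Section UniversalProperty.

Variables (K : Grp) (f : {group gT} -> gT -> K).
Hypothesis compat_f : compatible_family U f.

Definition hom_extending (G : {set gT}) (Fs : {set {group gT}}) (phi : gT -> K) :=
  hom_on G phi /\ forall F, F \in Fs -> {in F, forall x, phi x = f F x}.

Lemma compatible_Fam p : p \in pi -> compatible_family (Fam p) f.
Proof.
move=> pi_p; have [hom_f conj_f] := compat_f; have FamU := mem_union_Fam pi_p.
by split=> [F /FamU /hom_f | F1 F2 h g /FamU F1U /FamU F2U]; last exact: conj_f.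
Qed.

(* For commuting h and g the conjugation relation reads
   f F2 g = (f F1 h)^-1 (f F2 g) (f F1 h). *)
Lemma gcomm_Fam p q F1 F2 h g : p \in pi -> q \in pi -> p != q ->
    F1 \in Fam p -> F2 \in Fam q -> h \in F1 -> g \in F2 ->
  gcomm (f F1 h) (f F2 g).
Proof.
move=> pi_p pi_q pq FamF1 FamF2 F1h F2g; apply: gcomm_conj_fix.
have sF1O := Fam_sub_pcore pi_p FamF1; have sF2O := Fam_sub_pcore pi_q FamF2.
have [_ conj_f] := compat_f.
have := conj_f F1 F2 h g (mem_union_Fam pi_p FamF1) (mem_union_Fam pi_q FamF2) F1h F2g.
have Oh := subsetP sF1O h F1h.
have -> : (F2 :^ h)%G = F2.
  apply: group_inj; apply/normP/(subsetP (cent_sub _))/centP => y F2y.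
  exact: commute_pcore_nil nilH pq Oh (subsetP sF2O y F2y).
have -> // : g ^ h = g.
by apply/conjg_fixP/commgP/esym/(commute_pcore_nil nilH pq Oh (subsetP sF2O g F2g)).
Qed.

Variable Phi : nat -> gT -> K.
Hypothesis PhiP : forall p, p \in pi -> hom_extending 'O_p(H) (Fam p) (Phi p).

Lemma gcomm_Phi p q u v : p \in pi -> q \in pi -> p != q ->
  u \in 'O_p(H) -> v \in 'O_q(H) -> gcomm (Phi p u) (Phi q v).
Proof.
move=> pi_p pi_q pq.
have [[_ _ genOp] _] := sumO pi_p; have [[_ _ genOq] _] := sumO pi_q.
have [homp fp] := PhiP pi_p; have [homq fq] := PhiP pi_q.
rewrite -genOp -genOq in homp homq *.
move=> Ou Ov; apply/gcommC; move: v Ov.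
apply: hom_on_gen_gcomm homq _ => y /bigcupP[F2 FamF2 F2y]; apply/gcommC; move: u Ou.
apply: hom_on_gen_gcomm homp _ => x /bigcupP[F1 FamF1 F1x].
by rewrite (fp F1) ?(fq F2) //; apply: gcomm_Fam pi_p pi_q pq FamF1 FamF2 F1x F2y.
Qed.

Definition Phi_prod x := \big[@gmul K/gone K]_(p <- pi) Phi p x.`_p.

Lemma hom_on_Phi_prod : hom_on H Phi_prod.
Proof.
move=> x y Hx Hy; rewrite /Phi_prod -big_gmul_split ?primes_uniq //; last first.
  by move=> p q pi_p pi_q pq; apply: gcomm_Phi; rewrite ?constt_pcore_nil.
apply: eq_big_seq => p pi_p; have [homp _] := PhiP pi_p.
by rewrite (consttM_nil nilH) // homp ?constt_pcore_nil.
Qed.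

Lemma Phi_prod_Fam F : F \in U -> {in F, forall x, Phi_prod x = f F x}.
Proof.
case/mem_union_FamP=> p pi_p FamF x Fx; have [homp fp] := PhiP pi_p.
have Ox := subsetP (Fam_sub_pcore pi_p FamF) x Fx.
have px : p.-elt x by rewrite -(mem_pcore_nil nilH) // (subsetP (pcore_sub _ _) x Ox).
rewrite /Phi_prod (big_gmul_only (primes_uniq _) pi_p).
  by rewrite constt_p_elt // (fp F).
move=> q pi_q qp; have [homq _] := PhiP pi_q.
rewrite (_ : x.`_q = 1) ?(hom_on1 homq) //; apply/constt1P.
by apply: sub_p_elt px => r; rewrite !inE => /eqP ->; rewrite eq_sym.
Qed.

End UniversalProperty.

Lemma union_Fam_universal (K : Grp) (f : {group gT} -> gT -> K) :
    compatible_family U f ->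
  exists phi : gT -> K,
    [/\ hom_on H phi,
        (forall F, F \in U -> {in F, forall x, phi x = f F x})
      & forall psi : gT -> K, hom_on H psi ->
          (forall F, F \in U -> {in F, forall x, psi x = f F x}) ->
          {in H, forall x, psi x = phi x}].
Proof.
move=> compat_f.
have [Phi PhiP] : exists Phi : nat -> gT -> K,
    forall p, p \in pi -> hom_extending f 'O_p(H) (Fam p) (Phi p).
  apply: (ClassicalEpsilon.choice
           (fun p phi => p \in pi -> hom_extending f 'O_p(H) (Fam p) phi)) => p.
  have [pi_p | _] := boolP (p \in pi); last by exists (fun=> gone K).
  have [_ univ] := sumO pi_p.
  by have [phi [homphi fphi _]] := univ K f (compatible_Fam compat_f pi_p); exists phi.
have homPhi := hom_on_Phi_prod compat_f PhiP; have fPhi := Phi_prod_Fam PhiP.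
exists (Phi_prod Phi); split=> // psi hompsi fpsi.
have [_ _ genH] := union_Fam_conj_closed_gen.
rewrite -genH in hompsi homPhi *; apply: eq_hom_on_gen => // x /bigcupP[F UF Fx].
by rewrite (fpsi F) ?(fPhi F).
Qed.

Lemma active_sum_union_pcores : is_active_sum H U.
Proof. by split; [apply: union_Fam_conj_closed_gen | apply: union_Fam_universal]. Qed.

End ActiveSumNilpotent.

Theorem lemma4p3 (gT : finGroupType) (H : {group gT})
  (P A B : nat -> {group gT}) :
  nilpotent H ->
  (forall p, p \in primes #|H| ->
     [/\ P p \in 'Syl_p(H),
         [/\ cyclic (A p), cyclic (B p), A p <| P p
            & (B p * A p)%g = P p :> {set gT}],
         regular_family (P p) (metacyc_family (P p) (A p) (B p)),
         independent_family (P p) (metacyc_family (P p) (A p) (B p))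
       & is_active_sum (P p) (metacyc_family (P p) (A p) (B p))]) ->
  is_active_sum H (\bigcup_(p <- primes #|H|) metacyc_family (P p) (A p) (B p)).
Proof.
move=> nilH hyp; apply: active_sum_union_pcores => // p pi_p.
have [sylP _ _ _ sumP] := hyp p pi_p.
have -> : 'O_p(H)%G = P p.
  by apply/group_inj/esym/(nilpotent_Hall_pcore nilH); rewrite inE in sylP.
exact: sumP.
Qed.
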